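(* Let $x^\ast\in\mathcal C$ be a local minimizer of the MPVC, and assume $f$ is locally Lipschitz continuous around $x^\ast$. If MPVC-generalized quasinormality holds at $x^\ast$, then the MPVC-tailored penalty function $P_\alpha$ is exact at $x^\ast$: there exists $\bar\alpha\ge 0$ such that $x^\ast$ is a local minimizer of $P_\alpha$ over $\mathbb R^n$ for every $\alpha\ge\bar\alpha$. (One may take $\bar\alpha=cL$, where $L$ is a local Lipschitz constant of $f$ near $x^\ast$ and $c>0$ is a constant depending only on the constraints and $x^\ast$.)
   Context: MPVC setup. Let $f,g_1,\dots,g_m,h_1,\dots,h_l,G_1,\dots,G_q,H_1,\dots,H_q:\mathbb R^n\to\mathbb R$ be continuously differentiable. The MPVC is: minimize $f(x)$ subject to $g_i(x)\le 0$ $(i=1,\dots,m)$, $h_j(x)=0$ $(j=1,\dots,l)$, $H_i(x)\ge 0$ and $G_i(x)H_i(x)\le 0$ $(i=1,\dots,q)$. Its feasible set is denoted $\mathcal C$. For $x^\ast\in\mathcal C$ define the index sets $I_g=\{i: g_i(x^\ast)=0\}$, $I_+=\{i:H_i(x^\ast)>0\}$, $I_0=\{i:H_i(x^\ast)=0\}$, $I_{+0}=\{i:H_i(x^\ast)>0,\ G_i(x^\ast)=0\}$, $I_{+-}=\{i:H_i(x^\ast)>0,\ G_i(x^\ast)<0\}$, $I_{0+}=\{i:H_i(x^\ast)=0,\ G_i(x^\ast)>0\}$, $I_{0-}=\{i:H_i(x^\ast)=0,\ G_i(x^\ast)<0\}$, $I_{00}=\{i:H_i(x^\ast)=0,\ G_i(x^\ast)=0\}$.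 Admissible multipliers. A vector $(\lambda,\mu,\eta^G,\eta^H)\in\mathbb R^m\times\mathbb R^l\times\mathbb R^q\times\mathbb R^q$ is called an admissible multiplier at $x^\ast$ if (i) $\sum_{i=1}^m\lambda_i\nabla g_i(x^\ast)+\sum_{j=1}^l\mu_j\nabla h_j(x^\ast)+\sum_{i=1}^q\eta^G_i\nabla G_i(x^\ast)-\sum_{i=1}^q\eta^H_i\nabla H_i(x^\ast)=0$; (ii) $\lambda_i\ge0$ for $i\in I_g$, $\lambda_i=0$ for $i\notin I_g$; $\eta^G_i=0$ for $i\in I_{+-}\cup I_{0-}\cup I_{0+}$, $\eta^G_i\ge0$ for $i\in I_{+0}\cup I_{00}$; $\eta^H_i=0$ for $i\in I_+$, $\eta^H_i\ge 0$ for $i\in I_{0-}$, $\eta^H_i$ free for $i\in I_{0+}$; and $\eta^H_i\eta^G_i=0$ for $i\in I_{00}$. MPVC-generalized quasinormality holds at $x^\ast\in\mathcal C$ if there is no nonzero admissible multiplier $(\lambda,\mu,\eta^G,\eta^H)$ at $x^\ast$ for which there exists a sequence $x^k\to x^\ast$ such that for all $k$: $\lambda_i>0\Rightarrow \lambda_i g_i(x^k)>0$; $\mu_j\ne0\Rightarrow\mu_j h_j(x^k)>0$; $\eta^H_i\neq0\Rightarrow \eta^H_iH_i(x^k)<0$; $\eta^G_i>0\Rightarrow\eta^G_iG_i(x^k)>0$. MPVC-tailored penalty function: for $\alpha\ge0$, $P_\alpha(x)=f(x)+\alpha\Big[\sum_{i=1}^m\max\{0,g_i(x)\}+\sum_{j=1}^l|h_j(x)|+\sum_{i=1}^q\max\{0,-H_i(x),\min\{G_i(x),H_i(x)\}\}\Big]$.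 (This equals $f(x)+\alpha\,\mathrm{dist}_\Delta(F(x))$ in the $\ell_1$-norm, where $F(x)=(g(x),h(x),(G_i(x),H_i(x))_{i=1}^q)$ and $\Delta=(-\infty,0]^m\times\{0\}^l\times\Omega^q$ with $\Omega=\{(a,b)\in\mathbb R^2: b\ge0,\ ab\le0\}$.) *)

From mathcomp Require Import ssreflect ssrfun ssrbool eqtype ssrnat seq choice fintype bigop.
From Stdlib Require Import Reals.
Open Scope R_scope.

Definition vec (n : nat) := 'I_n -> R.

Definition rsum {k : nat} (F : 'I_k -> R) : R := \big[Rplus/0%R]_(i < k) F i.

Definition dot {n} (u v : vec n) : R := rsum (fun i => u i * v i).
Definition vnorm {n} (u : vec n) : R := sqrt (dot u u).
Definition vsub {n} (u v : vec n) : vec n := fun i => u i - v i.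
Definition dist {n} (u v : vec n) : R := vnorm (vsub u v).

Definition has_gradient {n} (f : vec n -> R) (x : vec n) (d : vec n) : Prop :=
  forall eps, 0 < eps -> exists delta, 0 < delta /\
    forall y, dist y x < delta ->
      Rabs (f y - f x - dot d (vsub y x)) <= eps * dist y x.

Definition is_C1 {n} (f : vec n -> R) (df : vec n -> vec n) : Prop :=
  (forall x, has_gradient f x (df x)) /\
  (forall x eps, 0 < eps -> exists delta, 0 < delta /\
      forall y, dist y x < delta -> dist (df y) (df x) < eps).

Definition locally_lipschitz {n} (f : vec n -> R) (x0 : vec n) : Prop :=
  exists L delta, 0 <= L /\ 0 < delta /\
    forall y z, dist y x0 < delta -> dist z x0 < delta ->
      Rabs (f y - f z) <= L * dist y z.

Definition seq_converges {n} (xs : nat -> vec n) (x0 : vec n) : Prop :=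
  forall eps, 0 < eps -> exists N, forall k, (N <= k)%nat -> dist (xs k) x0 < eps.

Section MPVC.
Context {n m l q : nat}
  (f : vec n -> R) (g : 'I_m -> vec n -> R) (h : 'I_l -> vec n -> R)
  (G H : 'I_q -> vec n -> R).

Definition feasible (x : vec n) : Prop :=
  (forall i, g i x <= 0) /\ (forall j, h j x = 0) /\
  (forall i, 0 <= H i x /\ G i x * H i x <= 0).

Definition local_min_on (phi : vec n -> R) (S : vec n -> Prop) (xs : vec n) : Prop :=
  exists eps, 0 < eps /\ forall y, S y -> dist y xs < eps -> phi xs <= phi y.

Definition mpvc_local_min (xs : vec n) : Prop :=
  feasible xs /\ local_min_on f feasible xs.

(* admissible multipliers at xs; dg, dh, dG, dH are the gradient maps *)
Definition admissible (dg : 'I_m -> vec n -> vec n) (dh : 'I_l -> vec n -> vec n)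
  (dG dH : 'I_q -> vec n -> vec n) (xs : vec n)
  (lam : 'I_m -> R) (mu : 'I_l -> R) (etaG etaH : 'I_q -> R) : Prop :=
  (forall k : 'I_n,
     rsum (fun i => lam i * dg i xs k) + rsum (fun j => mu j * dh j xs k)
     + rsum (fun i => etaG i * dG i xs k) - rsum (fun i => etaH i * dH i xs k) = 0) /\
  (forall i, g i xs = 0 -> 0 <= lam i) /\
  (forall i, g i xs <> 0 -> lam i = 0) /\
  (forall i, 0 < H i xs -> G i xs < 0 -> etaG i = 0) /\
  (forall i, H i xs = 0 -> G i xs < 0 -> etaG i = 0) /\
  (forall i, H i xs = 0 -> 0 < G i xs -> etaG i = 0) /\
  (forall i, 0 < H i xs -> G i xs = 0 -> 0 <= etaG i) /\
  (forall i, H i xs = 0 -> G i xs = 0 -> 0 <= etaG i) /\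
  (forall i, 0 < H i xs -> etaH i = 0) /\
  (forall i, H i xs = 0 -> G i xs < 0 -> 0 <= etaH i) /\
  (forall i, H i xs = 0 -> G i xs = 0 -> etaH i * etaG i = 0).

Definition nonzero_multiplier (lam : 'I_m -> R) (mu : 'I_l -> R) (etaG etaH : 'I_q -> R) : Prop :=
  (exists i, lam i <> 0) \/ (exists j, mu j <> 0) \/
  (exists i, etaG i <> 0) \/ (exists i, etaH i <> 0).

Definition MPVC_GQN (dg : 'I_m -> vec n -> vec n) (dh : 'I_l -> vec n -> vec n)
  (dG dH : 'I_q -> vec n -> vec n) (xs : vec n) : Prop :=
  ~ exists lam mu etaG etaH (xk : nat -> vec n),
      admissible dg dh dG dH xs lam mu etaG etaH /\
      nonzero_multiplier lam mu etaG etaH /\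
      seq_converges xk xs /\
      forall k,
        (forall i, 0 < lam i -> 0 < lam i * g i (xk k)) /\
        (forall j, mu j <> 0 -> 0 < mu j * h j (xk k)) /\
        (forall i, etaH i <> 0 -> etaH i * H i (xk k) < 0) /\
        (forall i, 0 < etaG i -> 0 < etaG i * G i (xk k)).

Definition penalty (alpha : R) (x : vec n) : R :=
  f x + alpha * (rsum (fun i => Rmax 0 (g i x)) + rsum (fun j => Rabs (h j x))
                 + rsum (fun i => Rmax 0 (Rmax (- H i x) (Rmin (G i x) (H i x))))).

Definition exact_penalty_at (xs : vec n) : Prop :=
  exists abar, 0 <= abar /\
    forall alpha, abar <= alpha -> local_min_on (penalty alpha) (fun _ => True) xs.

End MPVC.

(* Clarke's exact penalization: if the infeasibility measure [infeas] (the l1 constraint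
   residual, so that [penalty alpha = f + alpha * infeas]) admits a local error bound
   dist(y, C) <= c * infeas y near x*, then for alpha >= c L every y near x* has a feasible z
   with f x* <= f z <= f y + L c infeas y <= penalty alpha y.

   The error bound follows from MPVC-generalized quasinormality by contradiction. If it fails,
   there are y_k -> x* with (k + 1) infeas y_k < dist(y_k, C). Minimizing
   sqrt W + 2 / (k + 1) dist(_, y_k), where W = [sq_infeas] is the squared residual, over a small
   ball around y_k gives z_k -> x* with W z_k > 0 at which the gradient of a smooth upper model
   of W (the min in the vanishing-constraint residual frozen at its active branch) is
   o(sqrt (W z_k)). The residuals divided by sqrt (W z_k) are approximate multipliers of norm
   one; along a convergent subsequence they tend to a nonzero admissible multiplier whose signs
   agree with the constraint values at z_k, contradicting quasinormality. *)

From HB Require Import structures.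
From mathcomp Require Import ssreflect ssrfun ssrbool eqtype ssrnat seq fintype bigop.
From Stdlib Require Import Reals Psatz Classical ClassicalEpsilon.
From mathcomp Require Import zify.
(* After [Reals], whose [Rtopology] exports another [dist]. *)
Open Scope R_scope.

Set Implicit Arguments.
Unset Strict Implicit.

HB.instance Definition _ := Monoid.isComLaw.Build R 0 Rplus
  (fun a b c => esym (Rplus_assoc a b c)) Rplus_comm Rplus_0_l.
HB.instance Definition _ := Monoid.isMulLaw.Build R 0 Rmult Rmult_0_l Rmult_0_r.
HB.instance Definition _ :=
  Monoid.isAddLaw.Build R Rmult Rplus Rmult_plus_distr_r Rmult_plus_distr_l.

(** * Finite sums and Euclidean geometry *)

Lemma Rabs_le_inv x a : Rabs x <= a -> - a <= x <= a.
Proof. by move=> H; have := Rle_abs x; have := Rle_abs (- x); rewrite Rabs_Ropp; lra. Qed.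

Section FiniteSums.
Context {k : nat}.
Implicit Types F : 'I_k -> R.

Lemma rsum_plus F1 F2 : rsum (fun i => F1 i + F2 i) = rsum F1 + rsum F2.
Proof. by rewrite /rsum big_split. Qed.

Lemma rsum_scal c F : rsum (fun i => c * F i) = c * rsum F.
Proof. by rewrite /rsum big_distrr. Qed.

Lemma rsum_ext F1 F2 : (forall i, F1 i = F2 i) -> rsum F1 = rsum F2.
Proof. by move=> E; rewrite /rsum; apply: eq_bigr => i _. Qed.

Lemma rsum_opp F : rsum (fun i => - F i) = - rsum F.
Proof.
  have -> : - rsum F = -1 * rsum F by ring.
  by rewrite -rsum_scal; apply: rsum_ext => i; ring.
Qed.

Lemma rsum_minus F1 F2 : rsum (fun i => F1 i - F2 i) = rsum F1 - rsum F2.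
Proof. by rewrite rsum_plus rsum_opp. Qed.

Lemma rsum_const c : rsum (fun _ : 'I_k => c) = INR k * c.
Proof.
  rewrite /rsum big_const_ord; elim: k => [|p IH]; first by rewrite /= Rmult_0_l.
  by rewrite iterS IH S_INR; ring.
Qed.

Lemma rsum_le F1 F2 : (forall i, F1 i <= F2 i) -> rsum F1 <= rsum F2.
Proof.
  move=> E; rewrite /rsum.
  by apply: (big_ind2 (fun a b => a <= b)) => [|a b c d|i _]; [lra|lra|apply: E].
Qed.

Lemma rsum_nonneg F : (forall i, 0 <= F i) -> 0 <= rsum F.
Proof. move=> E; rewrite -(Rmult_0_r (INR k)) -rsum_const; exact: rsum_le. Qed.

Lemma rsum_zero F : (forall i, F i = 0) -> rsum F = 0.
Proof. by move=> E; rewrite /rsum big1. Qed.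

Lemma Rabs_rsum_le F : Rabs (rsum F) <= rsum (fun i => Rabs (F i)).
Proof.
  rewrite /rsum; apply: (big_ind2 (fun a b => Rabs a <= b)) => [|a b c d Ha Hc|i _].
  - by rewrite Rabs_R0; lra.
  - by have := Rabs_triang a c; lra.
  - lra.
Qed.

Lemma rsum_term_le F i : (forall j, 0 <= F j) -> F i <= rsum F.
Proof.
  move=> E; rewrite /rsum (bigD1 i) //= -{1}(Rplus_0_r (F i)).
  apply: Rplus_le_compat_l.
  by apply: (big_ind (fun a => 0 <= a)) => [|a b|j _]; [lra|lra|exact: E].
Qed.

Lemma rsum_sqr_le F : (forall j, 0 <= F j) -> rsum (fun i => F i * F i) <= rsum F * rsum F.
Proof.
  move=> E; rewrite /rsum.
  suff [] : 0 <= \big[Rplus/0]_(i < k) F i /\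
    \big[Rplus/0]_(i < k) (F i * F i)
      <= \big[Rplus/0]_(i < k) F i * \big[Rplus/0]_(i < k) F i by [].
  apply: (big_ind2 (fun a b => 0 <= b /\ a <= b * b)) => [|a b c d [? ?] [? ?]|i _].
  - lra.
  - split; nra.
  - by have := E i; split; nra.
Qed.

End FiniteSums.

Lemma rsum_exchange {k p} (F : 'I_k -> 'I_p -> R) :
  rsum (fun i => rsum (fun j => F i j)) = rsum (fun j => rsum (fun i => F i j)).
Proof. by rewrite /rsum exchange_big. Qed.

Lemma ex_common_radius {k} (Q : 'I_k -> R -> Prop) :
  (forall i, exists d, 0 < d /\ forall d', 0 < d' -> d' <= d -> Q i d') ->
  exists d, 0 < d /\ forall i, Q i d.
Proof.
  move=> HQ; have [dd Hdd] := choice _ HQ.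
  have Hinv j : 0 <= / dd j by have := proj1 (Hdd j); move=> ?; apply/Rlt_le/Rinv_0_lt_compat.
  have Hs := rsum_nonneg Hinv.
  exists (/ (1 + rsum (fun i => / dd i))); split => [|i].
    by apply: Rinv_0_lt_compat; lra.
  have [Hi HQi] := Hdd i; apply: HQi; first by apply: Rinv_0_lt_compat; lra.
  rewrite -(Rinv_inv (dd i)); apply: Rinv_le_contravar; first exact: Rinv_0_lt_compat.
  have := rsum_term_le i Hinv; lra.
Qed.

Lemma ex_common_rank {k} (P : 'I_k -> nat -> Prop) :
  (forall i, exists N, forall j, (j >= N)%coq_nat -> P i j) ->
  exists N, forall i j, (j >= N)%coq_nat -> P i j.
Proof.
  move=> HP; have [NN HN] := choice _ HP.
  have HM i : (NN i <= \max_(i : 'I_k) NN i)%nat := @leq_bigmax _ NN i.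
  by exists (\max_(i : 'I_k) NN i) => i j Hj; apply: HN; have := HM i; lia.
Qed.

Section Euclidean.
Context {n : nat}.
Implicit Types u v x y z : vec n.

Definition vadd u v : vec n := fun i => u i + v i.
Definition vscal (c : R) u : vec n := fun i => c * u i.

Lemma dot_comm u v : dot u v = dot v u.
Proof. by apply: rsum_ext => i; ring. Qed.

Lemma dot_ext u u' v v' :
  (forall i, u i = u' i) -> (forall i, v i = v' i) -> dot u v = dot u' v'.
Proof. by move=> E1 E2; apply: rsum_ext => i; rewrite E1 E2. Qed.

Lemma dot_plus_l u u' v : dot (vadd u u') v = dot u v + dot u' v.
Proof. by rewrite /dot -rsum_plus; apply: rsum_ext => i; rewrite /vadd; ring. Qed.

Lemma dot_scal_l c u v : dot (vscal c u) v = c * dot u v.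
Proof. by rewrite /dot -rsum_scal; apply: rsum_ext => i; rewrite /vscal; ring. Qed.

Lemma dot_self_nonneg u : 0 <= dot u u.
Proof. by apply: rsum_nonneg => i; nra. Qed.

Lemma vnorm_nonneg u : 0 <= vnorm u.
Proof. exact: sqrt_pos. Qed.

Lemma vnorm_sqr u : vnorm u * vnorm u = dot u u.
Proof. exact/sqrt_sqrt/dot_self_nonneg. Qed.

Lemma vnorm_ext u v : (forall i, u i = v i) -> vnorm u = vnorm v.
Proof. by move=> E; rewrite /vnorm (dot_ext E E). Qed.

Lemma quadratic_nonneg_discr a b c :
  0 <= c -> (forall t, 0 <= a + 2 * t * b + t * t * c) -> b * b <= a * c.
Proof.
  move=> Hc Hq; case: (Rle_lt_or_eq_dec _ _ Hc) => [Hc'|Hc0]; last subst c.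
  - have := Hq (- b / c).
    have -> : a + 2 * (- b / c) * b + - b / c * (- b / c) * c = a - b * b / c
      by field; lra.
    have : b * b = b * b / c * c by field; lra.
    nra.
  - case: (Req_dec b 0) => [->|Hb]; first lra.
    have := Hq (- (Rabs a + 1) / (2 * b)).
    have -> : a + 2 * (- (Rabs a + 1) / (2 * b)) * b
      + - (Rabs a + 1) / (2 * b) * (- (Rabs a + 1) / (2 * b)) * 0 = a - (Rabs a + 1)
      by field.
    have := Rle_abs a; lra.
Qed.

Lemma Cauchy_Schwarz u v : Rabs (dot u v) <= vnorm u * vnorm v.
Proof.
  rewrite /vnorm -sqrt_mult; try exact: dot_self_nonneg.
  rewrite -sqrt_Rsqr_abs.
  apply/sqrt_le_1_alt/quadratic_nonneg_discr => [|t]; first exact: dot_self_nonneg.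
  have := dot_self_nonneg (vadd u (vscal t v)).
  rewrite dot_plus_l !dot_scal_l !(dot_comm _ (vadd _ _)) !dot_plus_l !dot_scal_l (dot_comm v u).
  nra.
Qed.

Lemma vnorm_triang u v : vnorm (vadd u v) <= vnorm u + vnorm v.
Proof.
  have := vnorm_nonneg u; have := vnorm_nonneg v; have := vnorm_nonneg (vadd u v).
  move=> H1 H2 H3; apply: Rsqr_incr_0_var; last lra.
  rewrite /Rsqr vnorm_sqr dot_plus_l !(dot_comm _ (vadd _ _)) !dot_plus_l (dot_comm v u).
  have := Cauchy_Schwarz u v; have := Rle_abs (dot u v); have := vnorm_sqr u; have := vnorm_sqr v.
  nra.
Qed.

Lemma vnorm_scal c u : vnorm (vscal c u) = Rabs c * vnorm u.
Proof.
  have E : dot (vscal c u) (vscal c u) = (c * c) * dot u u.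
    by rewrite /dot -rsum_scal; apply: rsum_ext => i; rewrite /vscal; ring.
  by rewrite /vnorm E sqrt_mult_alt ?sqrt_Rsqr_abs //; nra.
Qed.

Lemma Rabs_coord_le_vnorm u i : Rabs (u i) <= vnorm u.
Proof.
  rewrite -sqrt_Rsqr_abs; apply: sqrt_le_1_alt.
  by apply: (rsum_term_le (F := fun j => u j * u j)) => j; nra.
Qed.

Lemma vnorm_le_l1 u : vnorm u <= rsum (fun i => Rabs (u i)).
Proof.
  have H0 : 0 <= rsum (fun i => Rabs (u i)) by apply: rsum_nonneg => i; apply: Rabs_pos.
  rewrite /vnorm -(sqrt_Rsqr _ H0); apply: sqrt_le_1_alt.
  apply: Rle_trans (rsum_sqr_le (fun i => Rabs_pos (u i))).
  by apply: rsum_le => i; rewrite -Rabs_mult Rabs_pos_eq; nra.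
Qed.

Lemma dist_nonneg x y : 0 <= dist x y.
Proof. exact: vnorm_nonneg. Qed.

Lemma dist_sym x y : dist x y = dist y x.
Proof.
  rewrite /dist -(Rmult_1_l (vnorm (vsub y x))) -Rabs_R1 -(Rabs_Ropp 1) -vnorm_scal.
  by apply: vnorm_ext => i; rewrite /vscal /vsub; ring.
Qed.

Lemma dist_triang x y z : dist x z <= dist x y + dist y z.
Proof.
  apply: Rle_trans (vnorm_triang _ _); right.
  by apply: vnorm_ext => i; rewrite /vadd /vsub; ring.
Qed.

Lemma dist_refl x : dist x x = 0.
Proof. by rewrite /dist /vnorm /dot rsum_zero ?sqrt_0 // => i; rewrite /vsub; ring. Qed.

Lemma Rabs_coord_le_dist x y i : Rabs (x i - y i) <= dist x y.
Proof. exact: (Rabs_coord_le_vnorm (vsub x y)). Qed.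

End Euclidean.

Arguments vadd {n}.
Arguments vscal {n}.

(** * Real sequences *)

Definition strict_incr (phi : nat -> nat) := forall j, (phi j < phi j.+1)%nat.

Lemma strict_incr_ge phi : strict_incr phi -> forall j, (j <= phi j)%nat.
Proof. by move=> Hphi; elim => [|j IH] //; have := Hphi j; lia. Qed.

Lemma strict_incr_mono phi :
  strict_incr phi -> forall a b, (a < b)%nat -> (phi a < phi b)%nat.
Proof.
  move=> Hphi a; elim => [//|b IH]; rewrite ltnS leq_eqVlt => /orP [/eqP ->|/IH Hab].
    exact: Hphi.
  by have := Hphi b; lia.
Qed.

Lemma strict_incr_comp phi psi :
  strict_incr phi -> strict_incr psi -> strict_incr (fun j => phi (psi j)).
Proof. by move=> Hphi Hpsi j; apply: strict_incr_mono. Qed.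

Lemma Un_cv_subseq a L phi : strict_incr phi -> Un_cv a L -> Un_cv (fun j => a (phi j)) L.
Proof.
  move=> Hphi Ha e He; have [N HN] := Ha e He.
  by exists N => j Hj; apply: HN; have := strict_incr_ge Hphi j; lia.
Qed.

Lemma Un_cv_const c : Un_cv (fun _ => c) c.
Proof. by move=> e He; exists 0%nat => j _; rewrite /Rdist Rminus_diag Rabs_R0. Qed.

Lemma Un_cv_inv_succ : Un_cv (fun j => / (INR j + 1)) 0.
Proof. exact: RinvN_cv. Qed.

Lemma Un_cv_eventually_pos a L :
  Un_cv a L -> 0 < L -> exists N, forall j, (j >= N)%coq_nat -> 0 < a j.
Proof.
  move=> Ha HL; have [N HN] := Ha L HL; exists N => j Hj.
  by have := HN j Hj; rewrite /Rdist; move/Rabs_def2; lra.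
Qed.

Lemma Un_cv_eventually_neg a L :
  Un_cv a L -> L < 0 -> exists N, forall j, (j >= N)%coq_nat -> a j < 0.
Proof.
  move=> Ha HL; have [N HN] := Ha (- L) ltac:(lra); exists N => j Hj.
  by have := HN j Hj; rewrite /Rdist; move/Rabs_def2; lra.
Qed.

Lemma Un_cv_eventually_lt a b La Lb :
  Un_cv a La -> Un_cv b Lb -> La < Lb -> exists N, forall j, (j >= N)%coq_nat -> a j < b j.
Proof.
  move=> Ha Hb Hlt; have [N HN] := Un_cv_eventually_neg (CV_minus _ _ _ _ Ha Hb) ltac:(lra).
  by exists N => j /HN; lra.
Qed.

Lemma Un_cv_nonneg a L :
  (exists N, forall j, (j >= N)%coq_nat -> 0 <= a j) -> Un_cv a L -> 0 <= L.
Proof.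
  move=> [N HN] Ha.
  apply: (Rle_cv_lim (Un := fun _ => 0) (Vn := fun j => a (j + N)%nat)).
  - by move=> j; apply: HN; lia.
  - exact: Un_cv_const.
  - exact: CV_shift'.
Qed.

Lemma Un_cv_eventually_zero a L :
  (exists N, forall j, (j >= N)%coq_nat -> a j = 0) -> Un_cv a L -> L = 0.
Proof.
  move=> [N HN] Ha; apply: (UL_sequence (fun j => a (j + N)%nat)); first exact: CV_shift'.
  by apply: Un_cv_ext (Un_cv_const 0) => j; rewrite HN //; lia.
Qed.

Lemma Un_cv_squeeze0 a b : (forall j, Rabs (a j) <= b j) -> Un_cv b 0 -> Un_cv a 0.
Proof.
  move=> Hab Hb e He; have [N HN] := Hb e He; exists N => j Hj.
  have := HN j Hj; have := Hab j; rewrite /Rdist !Rminus_0_r.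
  by move: (Rle_abs (b j)); lra.
Qed.

Lemma Un_cv_sign_eventually a b L :
  Un_cv a L -> (forall j, a j <> 0 -> 0 < a j * b j) -> L <> 0 ->
  exists N, forall j, (j >= N)%coq_nat -> 0 < L * b j.
Proof.
  move=> Ha Hab HL; case: (Rlt_or_le L 0) => HL'.
  - have [N HN] := Un_cv_eventually_neg Ha HL'; exists N => j Hj.
    by have := HN j Hj; move=> ?; have := Hab j ltac:(lra); nra.
  - have [N HN] := Un_cv_eventually_pos Ha ltac:(lra); exists N => j Hj.
    by have := HN j Hj; move=> ?; have := Hab j ltac:(lra); nra.
Qed.

Lemma Un_cv_sign_eventually_fin {k} (a b : nat -> 'I_k -> R) (L : 'I_k -> R) :
  (forall i, Un_cv (fun j => a j i) (L i)) -> (forall j i, a j i <> 0 -> 0 < a j i * b j i) ->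
  exists N, forall j, (j >= N)%coq_nat -> forall i, L i <> 0 -> 0 < L i * b j i.
Proof.
  move=> Ha Hab; case: (@ex_common_rank k (fun i j => L i <> 0 -> 0 < L i * b j i))
    => [i|N HN]; last by exists N => j Hj i; apply: HN.
  case: (Req_dec (L i) 0) => HL; first by exists 0%nat.
  by have [N HN] := Un_cv_sign_eventually (Ha i) (fun j => Hab j i) HL; exists N => j /HN.
Qed.

Lemma Un_cv_rsum {k} (a : 'I_k -> nat -> R) (L : 'I_k -> R) :
  (forall i, Un_cv (a i) (L i)) -> Un_cv (fun j => rsum (fun i => a i j)) (rsum L).
Proof.
  move=> Ha e He; have Hk : 0 < INR k + 1 by have := pos_INR k; lra.
  have [N HN] := @ex_common_rank k (fun i j => Rdist (a i j) (L i) < e / (INR k + 1))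
    (fun i => Ha i _ (Rdiv_lt_0_compat _ _ He Hk)).
  exists N => j Hj; rewrite /Rdist -rsum_minus.
  apply: Rle_lt_trans (Rabs_rsum_le _) _.
  apply: Rle_lt_trans (rsum_le (F2 := fun _ => e / (INR k + 1)) _) _.
    by move=> i; apply/Rlt_le/HN.
  rewrite rsum_const; apply: (Rmult_lt_reg_r (INR k + 1)) => //.
  have -> : INR k * (e / (INR k + 1)) * (INR k + 1) = INR k * e by field; lra.
  nra.
Qed.

Lemma seq_converges_shift {n} (xs : nat -> vec n) x N :
  seq_converges xs x -> seq_converges (fun j => xs (j + N)%nat) x.
Proof. by move=> Hx e He; have [M HM] := Hx e He; exists M => j Hj; apply: HM; lia. Qed.

Lemma seq_converges_coord {n} (xs : nat -> vec n) x :
  (forall i, Un_cv (fun j => xs j i) (x i)) -> seq_converges xs x.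
Proof.
  move=> Hx e He; have Hk : 0 < INR n + 1 by have := pos_INR n; lra.
  have [N HN] := @ex_common_rank n (fun i j => Rdist (xs j i) (x i) < e / (INR n + 1))
    (fun i => Hx i _ (Rdiv_lt_0_compat _ _ He Hk)).
  exists N => j Hj; apply: Rle_lt_trans (vnorm_le_l1 _) _.
  apply: Rle_lt_trans (rsum_le (F2 := fun _ => e / (INR n + 1)) _) _.
    by move=> i; apply/Rlt_le/HN; apply/leP.
  rewrite rsum_const; apply: (Rmult_lt_reg_r (INR n + 1)) => //.
  have -> : INR n * (e / (INR n + 1)) * (INR n + 1) = INR n * e by field; lra.
  nra.
Qed.

(** * Continuity and differentiability *)

Section Continuity.
Context {n : nat}.
Implicit Types F : vec n -> R.

Definition cont F x :=
  forall eps, 0 < eps -> exists d, 0 < d /\ forall y, dist y x < d -> Rabs (F y - F x) < eps.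

Definition cont2 (phi : R -> R -> R) a1 a2 :=
  forall eps, 0 < eps -> exists d, 0 < d /\ forall b1 b2,
    Rabs (b1 - a1) < d -> Rabs (b2 - a2) < d -> Rabs (phi b1 b2 - phi a1 a2) < eps.

Lemma cont_comp F phi x : cont F x -> continuity_pt phi (F x) -> cont (fun y => phi (F y)) x.
Proof.
  move=> HF Hphi e He; have [d [Hd Hd']] := Hphi e He.
  have [d2 [Hd2 Hd2']] := HF d Hd; exists d2; split => // y Hy.
  case: (Req_dec (F y) (F x)) => [->|Hne]; first by rewrite Rminus_diag Rabs_R0.
  apply: (Hd' (F y)); split; first by split => //; apply: not_eq_sym.
  exact: Hd2'.
Qed.

Lemma cont_comp2 F1 F2 phi x : cont F1 x -> cont F2 x -> cont2 phi (F1 x) (F2 x) ->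
  cont (fun y => phi (F1 y) (F2 y)) x.
Proof.
  move=> H1 H2 Hphi e He; have [d [Hd Hd']] := Hphi e He.
  have [d1 [Hd1 Hd1']] := H1 d Hd; have [d2 [Hd2 Hd2']] := H2 d Hd.
  exists (Rmin d1 d2); split => [|y Hy]; first exact: Rmin_glb_lt.
  have := Rmin_l d1 d2; have := Rmin_r d1 d2; move=> ? ?.
  by apply: Hd'; [apply: Hd1'|apply: Hd2']; lra.
Qed.

Lemma cont2_plus a1 a2 : cont2 Rplus a1 a2.
Proof.
  move=> e He; exists (e / 2); split => [|b1 b2 H1 H2]; first lra.
  have -> : b1 + b2 - (a1 + a2) = (b1 - a1) + (b2 - a2) by ring.
  by apply: Rle_lt_trans (Rabs_triang _ _) _; lra.
Qed.

Lemma cont2_mult a1 a2 : cont2 Rmult a1 a2.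
Proof.
  move=> e He; have A1 := Rabs_pos a1; have A2 := Rabs_pos a2.
  pose d := e / (Rabs a1 + Rabs a2 + 1).
  have Hd : 0 < d by apply: Rdiv_lt_0_compat; lra.
  have Hdd : d * (Rabs a1 + Rabs a2 + 1) = e by rewrite /d; field; lra.
  exists (Rmin 1 d); split => [|b1 b2 H1 H2]; first by apply: Rmin_glb_lt; lra.
  have := Rmin_l 1 d; have := Rmin_r 1 d; move=> ? ?.
  have -> : b1 * b2 - a1 * a2 = (b1 - a1) * (b2 - a2) + a1 * (b2 - a2) + a2 * (b1 - a1)
    by ring.
  have := Rabs_triang ((b1 - a1) * (b2 - a2) + a1 * (b2 - a2)) (a2 * (b1 - a1)).
  have := Rabs_triang ((b1 - a1) * (b2 - a2)) (a1 * (b2 - a2)).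
  rewrite !Rabs_mult; have := Rabs_pos (b1 - a1); have := Rabs_pos (b2 - a2).
  have : Rabs (b1 - a1) < 1 by lra.
  have : Rabs (b1 - a1) < d by lra.
  have : Rabs (b2 - a2) < d by lra.
  nra.
Qed.

Lemma cont2_max a1 a2 : cont2 Rmax a1 a2.
Proof.
  move=> e He; exists e; split => // b1 b2.
  rewrite /Rmax; case: Rle_dec; case: Rle_dec => ? ? /Rabs_def2 ? /Rabs_def2 ?;
  apply: Rabs_def1; lra.
Qed.

Lemma cont2_min a1 a2 : cont2 Rmin a1 a2.
Proof.
  move=> e He; exists e; split => // b1 b2.
  rewrite /Rmin; case: Rle_dec; case: Rle_dec => ? ? /Rabs_def2 ? /Rabs_def2 ?;
  apply: Rabs_def1; lra.
Qed.

Lemma cont_const c x : cont (fun _ => c) x.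
Proof. by move=> e He; exists 1; split => [|y _]; rewrite ?Rminus_diag ?Rabs_R0; lra. Qed.

Lemma cont_opp F x : cont F x -> cont (fun y => - F y) x.
Proof.
  move=> H e He; have [d [Hd Hd']] := H e He; exists d; split => // y Hy.
  have -> : - F y - - F x = - (F y - F x) by ring.
  by rewrite Rabs_Ropp; apply: Hd'.
Qed.

Lemma cont_plus F1 F2 x : cont F1 x -> cont F2 x -> cont (fun y => F1 y + F2 y) x.
Proof. by move=> H1 H2; apply: cont_comp2 H1 H2 (cont2_plus _ _). Qed.

Lemma cont_mult F1 F2 x : cont F1 x -> cont F2 x -> cont (fun y => F1 y * F2 y) x.
Proof. by move=> H1 H2; apply: cont_comp2 H1 H2 (cont2_mult _ _). Qed.

Lemma cont_max F1 F2 x : cont F1 x -> cont F2 x -> cont (fun y => Rmax (F1 y) (F2 y)) x.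
Proof. by move=> H1 H2; apply: cont_comp2 H1 H2 (cont2_max _ _). Qed.

Lemma cont_min F1 F2 x : cont F1 x -> cont F2 x -> cont (fun y => Rmin (F1 y) (F2 y)) x.
Proof. by move=> H1 H2; apply: cont_comp2 H1 H2 (cont2_min _ _). Qed.

Lemma cont_abs F x : cont F x -> cont (fun y => Rabs (F y)) x.
Proof. by move=> H; apply: cont_comp H (Rcontinuity_abs _). Qed.

Lemma cont_sqrt F x : cont F x -> 0 <= F x -> cont (fun y => sqrt (F y)) x.
Proof. by move=> H H0; apply: cont_comp H (continuity_pt_sqrt _ H0). Qed.

Lemma cont_rsum {k} (F : 'I_k -> vec n -> R) x :
  (forall i, cont (F i) x) -> cont (fun y => rsum (fun i => F i y)) x.
Proof.
  move=> H e He; have Hk : 0 < INR k + 1 by have := pos_INR k; lra.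
  case: (@ex_common_radius k
    (fun i d => forall y, dist y x < d -> Rabs (F i y - F i x) < e / (INR k + 1)))
    => [i|d [Hd Hd']].
    have [d [Hd Hd']] := H i _ (Rdiv_lt_0_compat _ _ He Hk).
    by exists d; split => // d' _ ? y Hy; apply: Hd'; lra.
  exists d; split => // y Hy; rewrite -rsum_minus.
  apply: Rle_lt_trans (Rabs_rsum_le _) _.
  apply: Rle_lt_trans (rsum_le (F2 := fun _ => e / (INR k + 1)) _) _.
    by move=> i; apply/Rlt_le/Hd'.
  rewrite rsum_const; apply: (Rmult_lt_reg_r (INR k + 1)) => //.
  have -> : INR k * (e / (INR k + 1)) * (INR k + 1) = INR k * e by field; lra.
  nra.
Qed.

Lemma cont_dist y x : cont (fun z => dist z y) x.
Proof.
  move=> e He; exists e; split => // z Hz; apply: Rabs_def1.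
  - by have := dist_triang z x y; lra.
  - by have := dist_triang x z y; rewrite (dist_sym x z); lra.
Qed.

Lemma Un_cv_cont F (xs : nat -> vec n) x :
  seq_converges xs x -> cont F x -> Un_cv (fun j => F (xs j)) (F x).
Proof.
  move=> Hx HF e He; have [d [Hd Hd']] := HF e He; have [N HN] := Hx d Hd.
  by exists N => j Hj; apply: Hd'; apply: HN; apply/leP.
Qed.

End Continuity.

Section Gradients.
Context {n : nat}.
Implicit Types (F : vec n -> R) (z d : vec n).

Lemma has_gradient_bound F z d : has_gradient F z d ->
  exists del, 0 < del /\
    forall y, dist y z < del -> Rabs (F y - F z) <= (vnorm d + 1) * dist y z.
Proof.
  move=> H; have [del [Hdel Hdel']] := H 1 Rlt_0_1; exists del; split => // y Hy.
  have := Hdel' y Hy; have := Cauchy_Schwarz d (vsub y z); rewrite -/(dist y z).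
  move: (dot d (vsub y z)) (F y - F z) => t a.
  by rewrite /Rabs; repeat case: Rcase_abs; lra.
Qed.

Lemma has_gradient_cont F z d : has_gradient F z d -> cont F z.
Proof.
  move=> H e He; have [del [Hdel Hdel']] := has_gradient_bound H.
  have HM : 0 < vnorm d + 1 by have := vnorm_nonneg d; lra.
  exists (Rmin del (e / (vnorm d + 1))); split.
    by apply: Rmin_glb_lt => //; apply: Rdiv_lt_0_compat.
  move=> y Hy; have := Rmin_l del (e / (vnorm d + 1)); have := Rmin_r del (e / (vnorm d + 1)).
  move=> H1 H2; apply: Rle_lt_trans (Hdel' y ltac:(lra)) _.
  have -> : e = (vnorm d + 1) * (e / (vnorm d + 1)) by field; lra.
  by apply: Rmult_lt_compat_l => //; lra.
Qed.

Lemma has_gradient_ext F1 F2 z d1 d2 :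
  (forall y, F1 y = F2 y) -> (forall i, d1 i = d2 i) ->
  has_gradient F1 z d1 -> has_gradient F2 z d2.
Proof.
  move=> EF Ed H e He; have [del [Hd Hd']] := H e He; exists del; split => // y Hy.
  by rewrite -!EF -(dot_ext (v := vsub y z) (v' := vsub y z) Ed (fun _ => erefl)); apply: Hd'.
Qed.

Lemma has_gradient_plus F1 F2 z d1 d2 :
  has_gradient F1 z d1 -> has_gradient F2 z d2 ->
  has_gradient (fun y => F1 y + F2 y) z (vadd d1 d2).
Proof.
  move=> H1 H2 e He.
  have [del1 [Hd1 Hd1']] := H1 (e / 2) ltac:(lra).
  have [del2 [Hd2 Hd2']] := H2 (e / 2) ltac:(lra).
  exists (Rmin del1 del2); split => [|y Hy]; first exact: Rmin_glb_lt.
  have := Hd1' y (Rlt_le_trans _ _ _ Hy (Rmin_l _ _)).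
  have := Hd2' y (Rlt_le_trans _ _ _ Hy (Rmin_r _ _)).
  rewrite dot_plus_l; have := dist_nonneg y z.
  move: (F1 y) (F2 y) (F1 z) (F2 z) (dot d1 (vsub y z)) (dot d2 (vsub y z)) => a b c d p r.
  by rewrite /Rabs; repeat case: Rcase_abs; lra.
Qed.

Lemma dot_rsum {k} (D : 'I_k -> vec n) (v : vec n) :
  dot (fun j => rsum (fun i => D i j)) v = rsum (fun i => dot (D i) v).
Proof.
  rewrite /dot -rsum_exchange; apply: rsum_ext => j.
  by rewrite Rmult_comm -rsum_scal; apply: rsum_ext => i; ring.
Qed.

Lemma has_gradient_rsum {k} (F : 'I_k -> vec n -> R) z (D : 'I_k -> vec n) :
  (forall i, has_gradient (F i) z (D i)) ->
  has_gradient (fun y => rsum (fun i => F i y)) z (fun j => rsum (fun i => D i j)).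
Proof.
  move=> H e He; have Hk : 0 < INR k + 1 by have := pos_INR k; lra.
  case: (@ex_common_radius k (fun i r => forall y, dist y z < r ->
     Rabs (F i y - F i z - dot (D i) (vsub y z)) <= e / (INR k + 1) * dist y z))
    => [i|r [Hr Hr']].
    have [r [Hr Hr']] := H i _ (Rdiv_lt_0_compat _ _ He Hk).
    by exists r; split => // r' _ ? y Hy; apply: Hr'; lra.
  exists r; split => // y Hy; rewrite dot_rsum -!rsum_minus.
  apply: Rle_trans (Rabs_rsum_le _) _.
  apply: Rle_trans (rsum_le (F2 := fun _ => e / (INR k + 1) * dist y z) _) _.
    by move=> i; apply: Hr'.
  rewrite rsum_const; have := dist_nonneg y z; have := pos_INR k => ? ?.
  have -> : INR k * (e / (INR k + 1) * dist y z) = INR k / (INR k + 1) * (e * dist y z)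
    by field; lra.
  have : INR k / (INR k + 1) <= 1.
    by apply: (Rmult_le_reg_r (INR k + 1)) => //; rewrite Rmult_1_l /Rdiv Rmult_assoc Rinv_l; lra.
  have := Rmult_le_pos _ _ (Rlt_le _ _ He) (dist_nonneg y z); nra.
Qed.

Lemma has_gradient_chain F z d (phi : R -> R) c K :
  has_gradient F z d -> 0 <= K ->
  (forall a, Rabs (phi a - phi (F z) - c * (a - F z)) <= K * ((a - F z) * (a - F z))) ->
  has_gradient (fun y => phi (F y)) z (vscal c d).
Proof.
  move=> HF HK Hphi e He.
  have [d0 [Hd0 HF0]] := has_gradient_bound HF.
  pose M := vnorm d + 1; have HM : 0 < M by have := vnorm_nonneg d; rewrite /M; lra.
  have HKM : 0 <= K * M * M by apply: Rmult_le_pos; [apply: Rmult_le_pos|]; lra.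
  have Hc := Rabs_pos c.
  pose e1 := e / 2 / (Rabs c + 1); pose e2 := e / 2 / (K * M * M + 1).
  have He1 : 0 < e1 by apply: Rdiv_lt_0_compat; lra.
  have He2 : 0 < e2 by apply: Rdiv_lt_0_compat; lra.
  have Ce1 : Rabs c * e1 <= e / 2.
    have -> : Rabs c * e1 = e / 2 - e1 by rewrite /e1; field; lra.
    lra.
  have Ce2 : K * M * M * e2 <= e / 2.
    have -> : K * M * M * e2 = e / 2 - e2 by rewrite /e2; field; lra.
    lra.
  have [d1 [Hd1 HF1]] := HF e1 He1.
  exists (Rmin (Rmin d0 d1) e2); split; first by repeat apply: Rmin_glb_lt.
  move=> y Hy; have := Rmin_l (Rmin d0 d1) e2; have := Rmin_r (Rmin d0 d1) e2.
  have := Rmin_l d0 d1; have := Rmin_r d0 d1; move=> ? ? ? ?.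
  have B0 := HF0 y ltac:(lra); have B1 := HF1 y ltac:(lra); have P := Hphi (F y).
  have Hte2 : dist y z <= e2 by lra.
  rewrite dot_scal_l; move: B0 B1 P Hte2 (dist_nonneg y z); rewrite -/M.
  set t := dist y z; set u := F y - F z; set w := dot d (vsub y z) => B0 B1 P Hte2 Ht.
  (* The first part is [O (u ^ 2) = O (t ^ 2)], the second is [c] times the remainder of [F]. *)
  have -> : phi (F y) - phi (F z) - c * w = (phi (F y) - phi (F z) - c * u) + c * (u - w)
    by rewrite /u; ring.
  apply: Rle_trans (Rabs_triang _ _) _; rewrite Rabs_mult.
  have Q1 : Rabs c * Rabs (u - w) <= e / 2 * t.
    apply: Rle_trans (Rmult_le_compat_l _ _ _ Hc B1) _.
    by have := Rmult_le_compat_r t _ _ Ht Ce1; lra.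
  have Q2 : K * (u * u) <= e / 2 * t.
    have Hu : u * u <= (M * t) * (M * t).
      by rewrite -(Rabs_pos_eq (u * u)) ?Rabs_mult; have := Rabs_pos u; nra.
    have : K * (M * M) * (t * t) <= K * (M * M) * (e2 * t).
      by apply: Rmult_le_compat_l; [nra|apply: Rmult_le_compat_r].
    have : K * (u * u) <= K * ((M * t) * (M * t)) by apply: Rmult_le_compat_l.
    have := Rmult_le_compat_r t _ _ Ht Ce2; lra.
  lra.
Qed.

Lemma Un_cv_C1 F dF (zs : nat -> vec n) x :
  is_C1 F dF -> seq_converges zs x -> Un_cv (fun j => F (zs j)) (F x).
Proof. by move=> [HF _] Hz; apply: Un_cv_cont Hz (has_gradient_cont (HF x)). Qed.

Lemma Un_cv_C1_grad F dF (zs : nat -> vec n) x k :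
  is_C1 F dF -> seq_converges zs x -> Un_cv (fun j => dF (zs j) k) (dF x k).
Proof.
  move=> [_ HdF] Hz e He; have [d [Hd Hd']] := HdF x e He; have [N HN] := Hz d Hd.
  exists N => j Hj; apply: Rle_lt_trans (Rabs_coord_le_dist _ _ k) _.
  by apply: Hd'; apply: HN; apply/leP.
Qed.

End Gradients.

(** * Compactness and two variational principles *)

Lemma Bolzano_Weierstrass_subseq (u : nat -> R) B :
  (forall j, Rabs (u j) <= B) ->
  exists phi l, strict_incr phi /\ Un_cv (fun j => u (phi j)) l.
Proof.
  move=> Hb.
  have [l Hl] := Bolzano_Weierstrass u _ (compact_P3 (-B) B) (fun j => Rabs_le_inv (Hb j)).
  have Hpick N j : exists p, (N < p)%nat /\ Rabs (u p - l) < / (INR j + 1).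
    have [p [Hp1 Hp2]] := Hl (disc l (RinvN j)) N.+1 (ex_intro _ (RinvN j) (fun x Hx => Hx)).
    by exists p; split => //; apply/leP.
  have [pick Hpk] := choice _ (fun N => choice _ (Hpick N)).
  (* [phi j] lies beyond [phi (j - 1)] and [u (phi j)] is [1 / (j + 1)]-close to [l]. *)
  pose fix phi j := if j is j'.+1 then pick (phi j') j else pick 0%nat 0%nat.
  have Hphi j : Rabs (u (phi j) - l) < / (INR j + 1) by case: j => [|j]; apply: (proj2 (Hpk _ _)).
  exists phi, l; split => [j|e He]; first exact: (proj1 (Hpk _ _)).
  have [N HN] := Un_cv_inv_succ He; exists N => j Hj.
  have := HN j Hj; rewrite /Rdist Rminus_0_r Rabs_pos_eq.
    by have := Hphi j; lra.
  by apply/Rlt_le/Rinv_0_lt_compat; have := pos_INR j; lra.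
Qed.

Lemma Bolzano_Weierstrass_fin (I : finType) (u : nat -> I -> R) B :
  (forall j i, Rabs (u j i) <= B) ->
  exists phi (l : I -> R), strict_incr phi /\ forall i, Un_cv (fun j => u (phi j) i) (l i).
Proof.
  move=> Hb; suff [phi [Hphi Hcv]] : exists phi, strict_incr phi /\
      forall i, i \in enum I -> exists L, Un_cv (fun j => u (phi j) i) L.
    have Hcv' i : exists L, Un_cv (fun j => u (phi j) i) L by apply: Hcv; rewrite mem_enum.
    by have [L HL] := choice _ Hcv'; exists phi, L.
  elim: (enum I) => [|a s [phi1 [Hphi1 IH]]].
    by exists (fun j => j); split => [j|i]; rewrite ?in_nil.
  have [phi2 [la [Hphi2 Hla]]] := Bolzano_Weierstrass_subseq (fun j => Hb (phi1 j) a).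
  exists (fun j => phi1 (phi2 j)); split; first exact: strict_incr_comp.
  move=> i; rewrite in_cons => /orP [/eqP ->|/IH [L HL]]; first by exists la.
  by exists L; apply: (Un_cv_subseq (a := fun j => u (phi1 j) i)).
Qed.

Lemma closed_ball_seq_compact {n} (xs : nat -> vec n) y r :
  (forall j, dist (xs j) y <= r) ->
  exists phi z, strict_incr phi /\ seq_converges (fun j => xs (phi j)) z /\ dist z y <= r.
Proof.
  move=> Hr; have [phi [l [Hphi Hl]]] := @Bolzano_Weierstrass_fin _ (fun j i => xs j i - y i) r
    (fun j i => Rle_trans _ _ _ (Rabs_coord_le_dist _ _ i) (Hr j)).
  pose z i := l i + y i.
  have Hz : seq_converges (fun j => xs (phi j)) z.
    apply: seq_converges_coord => i.
    by apply: Un_cv_ext (CV_plus _ _ _ _ (Hl i) (Un_cv_const (y i))) => j /=; ring.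
  exists phi, z; do 2!split => //.
  apply: Rnot_lt_le => Hlt; have [N HN] := Hz (dist z y - r) ltac:(lra).
  have := HN N (leqnn N); have := dist_triang z (xs (phi N)) y; have := Hr (phi N).
  by rewrite (dist_sym z (xs (phi N))) => ? ? ?; lra.
Qed.

Lemma ex_min_closed_ball {n} (psi : vec n -> R) y r :
  0 <= r -> (forall x, cont psi x) -> (forall x, 0 <= psi x) ->
  exists z, dist z y <= r /\ forall x, dist x y <= r -> psi z <= psi x.
Proof.
  move=> Hr Hc Hpos.
  pose E v := exists x, dist x y <= r /\ v = - psi x.
  have HEb : bound E by exists 0 => v [x [_ ->]]; have := Hpos x; lra.
  have HEy : exists v, E v by exists (- psi y), y; rewrite dist_refl.
  have [M [HM1 HM2]] := completeness E HEb HEy.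
  have Hlow x : dist x y <= r -> - M <= psi x.
    by move=> Hx; have := HM1 (- psi x) (ex_intro _ x (conj Hx erefl)); lra.
  have Happ j : exists x, dist x y <= r /\ psi x < - M + / (INR j + 1).
    apply: NNPP => Hn; have := RinvN_pos j => /= Hp.
    suff : M <= M - / (INR j + 1) by lra.
    apply: HM2 => v [x [Hx ->]]; apply: Rnot_lt_le => Hlt.
    by apply: Hn; exists x; split => //; lra.
  have [xs Hxs] := choice _ Happ.
  have [phi [z [Hphi [Hz Hzr]]]] := closed_ball_seq_compact (fun j => proj1 (Hxs j)).
  exists z; split => // x Hx; apply: Rle_trans (Hlow x Hx).
  apply: (Rle_cv_lim (Un := fun j => psi (xs (phi j)))
                     (Vn := fun j => - M + / (INR (phi j) + 1))).
  - by move=> j; apply/Rlt_le/(proj2 (Hxs _)).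
  - exact: Un_cv_cont.
  - rewrite -{2}(Rplus_0_r (- M)).
    exact: CV_plus (Un_cv_const _) (Un_cv_subseq Hphi Un_cv_inv_succ).
Qed.

Lemma sqrt_le_tangent a s : 0 <= a -> 0 < s -> sqrt a <= s + (a - s * s) / (2 * s).
Proof.
  move=> Ha Hs; have := sqrt_sqrt a Ha; have := sqrt_pos a.
  have := Rle_0_sqr (sqrt a - s); rewrite /Rsqr => ? ? ?.
  apply: (Rmult_le_reg_r (2 * s)); first lra.
  have -> : (s + (a - s * s) / (2 * s)) * (2 * s) = s * s + a by field; lra.
  nra.
Qed.

Lemma has_gradient_descent {n} (F : vec n -> R) z w eps :
  has_gradient F z w -> 0 < eps -> exists del, 0 < del /\ forall t, 0 < t -> t * vnorm w < del ->
    F (vadd z (vscal (- t) w)) <= F z - t * (vnorm w * vnorm w) + eps * (t * vnorm w).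
Proof.
  move=> HF He; have [del [Hdel Hdel']] := HF eps He; exists del; split => // t Ht Htw.
  have Hv i : vsub (vadd z (vscal (- t) w)) z i = vscal (- t) w i.
    by rewrite /vadd /vsub /vscal; ring.
  have Hd : dist (vadd z (vscal (- t) w)) z = t * vnorm w.
    by rewrite /dist (vnorm_ext Hv) vnorm_scal Rabs_Ropp Rabs_pos_eq //; lra.
  have Hdot : dot w (vsub (vadd z (vscal (- t) w)) z) = - t * (vnorm w * vnorm w).
    by rewrite (dot_ext (fun _ => erefl) Hv) dot_comm dot_scal_l vnorm_sqr.
  have := Hdel' _ (ltac:(rewrite Hd; lra) : dist (vadd z (vscal (- t) w)) z < del).
  rewrite Hdot Hd => /Rabs_le_inv; lra.
Qed.

(* Fermat's rule for [sqrt W + sig * dist _ y], with [W] touched from above at [z] by the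
   differentiable [Wt]. *)
Lemma local_min_sqrt_model_grad_le {n} (W Wt : vec n -> R) (w z y : vec n) sig rho :
  0 < sqrt (W z) -> 0 <= sig -> 0 < rho ->
  (forall x, 0 <= W x) -> (forall x, W x <= Wt x) -> W z = Wt z -> has_gradient Wt z w ->
  (forall x, dist x z < rho -> sqrt (W z) + sig * dist z y <= sqrt (W x) + sig * dist x y) ->
  vnorm w <= 2 * sqrt (W z) * sig.
Proof.
  move=> Hs Hsig Hrho HW HWt Heq Hgr Hmin; set s := sqrt (W z) in Hs Hmin *.
  have Hss : s * s = Wt z by rewrite /s sqrt_sqrt -?Heq.
  apply: Rnot_lt_le => Hc; set nw := vnorm w in Hc *.
  have Hnw : 0 < nw by have := Rmult_le_pos _ _ (Rlt_le _ _ Hs) Hsig; lra.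
  have Heps : 0 < (nw - 2 * s * sig) / 2 by lra.
  have [del [Hdel Hdesc]] := has_gradient_descent Hgr Heps.
  pose t := Rmin del rho / 2 / nw.
  have Htn : t * nw = Rmin del rho / 2 by rewrite /t; field; lra.
  have := Rmin_l del rho; have := Rmin_r del rho; have := Rmin_glb_lt _ _ _ Hdel Hrho.
  move=> Hm ? ?; have Ht : 0 < t by apply: Rdiv_lt_0_compat; lra.
  set x := vadd z (vscal (- t) w).
  have Hxz : dist x z = t * nw.
    by rewrite /dist (vnorm_ext (v := vscal (- t) w)) ?vnorm_scal ?Rabs_Ropp ?Rabs_pos_eq;
       [|lra|move=> i; rewrite /x /vadd /vsub /vscal; ring].
  have Hwt := Hdesc t Ht ltac:(rewrite -/nw; lra); rewrite -/x -/nw -Hss in Hwt.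
  have Hsx : sqrt (W x) <= s + (Wt x - s * s) / (2 * s).
    apply: Rle_trans (sqrt_le_tangent _ Hs); first exact/sqrt_le_1_alt.
    by have := HW x; have := HWt x; lra.
  have Htri : sig * dist x y <= sig * (t * nw) + sig * dist z y.
    by rewrite -Rmult_plus_distr_l -Hxz; apply: Rmult_le_compat_l => //; apply: dist_triang.
  have : (Wt x - s * s) / (2 * s)
      <= (- t * (nw * nw) + (nw - 2 * s * sig) / 2 * (t * nw)) / (2 * s).
    by apply: Rmult_le_compat_r; [apply/Rlt_le/Rinv_0_lt_compat|]; lra.
  have -> : (- t * (nw * nw) + (nw - 2 * s * sig) / 2 * (t * nw)) / (2 * s)
    = - sig * (t * nw) - t * nw * (nw - 2 * s * sig) / (4 * s) by field; lra.
  have : 0 < t * nw * (nw - 2 * s * sig) / (4 * s) by apply: Rdiv_lt_0_compat; nra.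
  have := Hmin x ltac:(lra); lra.
Qed.

Lemma exact_penalty_of_error_bound {n} (f P : vec n -> R) (S : vec n -> Prop) xs c d :
  local_min_on f S xs -> locally_lipschitz f xs ->
  cont P xs -> P xs = 0 -> (forall x, 0 <= P x) -> 0 < c -> 0 < d ->
  (forall y, dist y xs < d -> exists z, S z /\ dist y z <= c * P y) ->
  exists abar, 0 <= abar /\ forall alpha, abar <= alpha ->
    local_min_on (fun x => f x + alpha * P x) (fun _ => True) xs.
Proof.
  move=> [e0 [He0 Hloc]] [L [dL [HL [HdL Hlip]]]] HPc HP0 HP Hc Hd Heb.
  exists (c * L); split => [|alpha Ha]; first nra.
  pose r0 := Rmin d (Rmin dL e0) / 2.
  have Er0 : 2 * r0 = Rmin d (Rmin dL e0) by rewrite /r0; field.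
  have := Rmin_l d (Rmin dL e0); have := Rmin_r d (Rmin dL e0).
  have := Rmin_l dL e0; have := Rmin_r dL e0; move=> ? ? ? ?.
  have Hr0 : 0 < r0 by apply: Rdiv_lt_0_compat; [repeat apply: Rmin_glb_lt|]; lra.
  have [r1 [Hr1 HP1]] := HPc (r0 / c) (Rdiv_lt_0_compat _ _ Hr0 Hc).
  exists (Rmin r0 r1); split => [|y _ Hy]; first exact: Rmin_glb_lt.
  have := Rmin_l r0 r1; have := Rmin_r r0 r1; move=> ? ?.
  have HPy : c * P y < r0.
    have := HP1 y ltac:(lra); rewrite HP0 Rminus_0_r Rabs_pos_eq // => ?.
    have -> : r0 = c * (r0 / c) by field; lra.
    exact: Rmult_lt_compat_l.
  have [z [Hz Hyz]] := Heb y ltac:(lra).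
  have Hzx : dist z xs < 2 * r0.
    by have := dist_triang z y xs; rewrite (dist_sym z y); lra.
  have := Hloc z Hz ltac:(lra); have := Hlip y z ltac:(lra) ltac:(lra).
  rewrite HP0 => /Rabs_le_inv [? ?] ?.
  have : L * dist y z <= L * (c * P y) by apply: Rmult_le_compat_l.
  have : c * L * P y <= alpha * P y by apply: Rmult_le_compat_r.
  nra.
Qed.

(** * Squared infeasibility and approximate multipliers *)

Definition sqr_pos (t : R) := Rmax 0 t * Rmax 0 t.

Lemma sqr_pos_taylor a b :
  Rabs (sqr_pos a - sqr_pos b - 2 * Rmax 0 b * (a - b)) <= 1 * ((a - b) * (a - b)).
Proof.
  have := Rle_0_sqr (a - b); rewrite /Rsqr /sqr_pos /Rmax => ?.
  by case: Rle_dec; case: Rle_dec => ? ?; apply: Rabs_le; split; nra.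
Qed.

Lemma sqr_pos_le a b : a <= b -> sqr_pos a <= sqr_pos b.
Proof. by rewrite /sqr_pos /Rmax => ?; repeat case: Rle_dec; nra. Qed.

Lemma sqr_taylor a b : Rabs (a * a - b * b - 2 * b * (a - b)) <= 1 * ((a - b) * (a - b)).
Proof.
  have -> : a * a - b * b - 2 * b * (a - b) = (a - b) * (a - b) by ring.
  by rewrite Rmult_1_l Rabs_pos_eq; [lra|apply: Rle_0_sqr].
Qed.

Lemma has_gradient_sqr_pos {n} (F : vec n -> R) z d : has_gradient F z d ->
  has_gradient (fun x => sqr_pos (F x)) z (vscal (2 * Rmax 0 (F z)) d).
Proof.
  move=> HF; apply: (has_gradient_chain (phi := sqr_pos) HF Rle_0_1) => a.
  exact: sqr_pos_taylor.
Qed.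

Lemma has_gradient_sqr {n} (F : vec n -> R) z d : has_gradient F z d ->
  has_gradient (fun x => F x * F x) z (vscal (2 * F z) d).
Proof.
  move=> HF; apply: (has_gradient_chain (phi := fun t => t * t) HF Rle_0_1) => a.
  exact: sqr_taylor.
Qed.

Lemma has_gradient_sqr_pos_opp {n} (F : vec n -> R) z d : has_gradient F z d ->
  has_gradient (fun x => sqr_pos (- F x)) z (vscal (-2 * Rmax 0 (- F z)) d).
Proof.
  move=> HF; apply: (has_gradient_chain (phi := fun t => sqr_pos (- t)) HF Rle_0_1) => a.
  have := sqr_pos_taylor (- a) (- F z).
  have -> : 2 * Rmax 0 (- F z) * (- a - - F z) = -2 * Rmax 0 (- F z) * (a - F z) by ring.
  by have -> : (- a - - F z) * (- a - - F z) = (a - F z) * (a - F z) by ring.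
Qed.

Lemma scaled_sign c s : 0 <= s -> c * s <> 0 -> 0 < c * s * c.
Proof.
  move=> Hs Hne; have Hc : c <> 0 by move=> Hc; apply: Hne; rewrite Hc Rmult_0_l.
  case: (Rle_lt_or_eq_dec _ _ Hs) => [Hs'|Hs0]; last by rewrite -Hs0 Rmult_0_r in Hne.
  by have := Rsqr_pos_lt c Hc; rewrite /Rsqr; nra.
Qed.

Lemma inv_sqrt_nonneg x : 0 <= / sqrt x.
Proof.
  case: (Rle_lt_or_eq_dec _ _ (sqrt_pos x)) => [?|<-]; last by rewrite Rinv_0; lra.
  exact/Rlt_le/Rinv_0_lt_compat.
Qed.

Section MPVC.
Variables (n m l q : nat) (g : 'I_m -> vec n -> R) (h : 'I_l -> vec n -> R).
Variables (G H : 'I_q -> vec n -> R).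

Definition vc_res i x := Rmax 0 (Rmax (- H i x) (Rmin (G i x) (H i x))).

(* So that [penalty f g h G H alpha x] is convertible to [f x + alpha * infeas x]. *)
Definition infeas x :=
  rsum (fun i => Rmax 0 (g i x)) + rsum (fun j => Rabs (h j x)) + rsum (fun i => vc_res i x).

Definition sq_infeas x :=
  rsum (fun i => sqr_pos (g i x)) + rsum (fun j => h j x * h j x)
  + rsum (fun i => vc_res i x * vc_res i x).

Lemma vc_res_nonneg i x : 0 <= vc_res i x.
Proof. exact: Rmax_l. Qed.

Lemma infeas_nonneg x : 0 <= infeas x.
Proof.
  have := rsum_nonneg (fun i => Rmax_l 0 (g i x)).
  have := rsum_nonneg (fun j => Rabs_pos (h j x)).
  have := rsum_nonneg (fun i => vc_res_nonneg i x).
  rewrite /infeas; lra.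
Qed.

Lemma sq_infeas_nonneg x : 0 <= sq_infeas x.
Proof.
  have := @rsum_nonneg _ (fun i => sqr_pos (g i x)) (fun i => Rle_0_sqr _).
  have := @rsum_nonneg _ (fun j => h j x * h j x) (fun j => Rle_0_sqr _).
  have := @rsum_nonneg _ (fun i => vc_res i x * vc_res i x) (fun i => Rle_0_sqr _).
  rewrite /sq_infeas; lra.
Qed.

Lemma sq_infeas_le_sqr_infeas x : sq_infeas x <= infeas x * infeas x.
Proof.
  have H1 := rsum_sqr_le (fun i => Rmax_l 0 (g i x)).
  have H2 := rsum_sqr_le (fun j => Rabs_pos (h j x)).
  have H3 := rsum_sqr_le (fun i => vc_res_nonneg i x).
  have E : rsum (fun j => h j x * h j x) = rsum (fun j => Rabs (h j x) * Rabs (h j x)).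
    by apply: rsum_ext => j; rewrite -Rabs_mult Rabs_pos_eq //; nra.
  have := rsum_nonneg (fun i => Rmax_l 0 (g i x)).
  have := rsum_nonneg (fun j => Rabs_pos (h j x)).
  have := rsum_nonneg (fun i => vc_res_nonneg i x).
  rewrite /sq_infeas /infeas E /sqr_pos; nra.
Qed.

Lemma sqrt_sq_infeas_le x : sqrt (sq_infeas x) <= infeas x.
Proof.
  rewrite -(sqrt_square (infeas x)); last exact: infeas_nonneg.
  exact/sqrt_le_1_alt/sq_infeas_le_sqr_infeas.
Qed.

Lemma infeas_feasible x : feasible g h G H x -> infeas x = 0.
Proof.
  move=> [Fg [Fh FGH]]; rewrite /infeas !rsum_zero; [lra| | |] => i.
  - by have := FGH i; rewrite /vc_res /Rmax /Rmin; repeat case: Rle_dec; nra.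
  - by rewrite Fh Rabs_R0.
  - by have := Fg i; rewrite /Rmax; case: Rle_dec; lra.
Qed.

Lemma feasible_sq_infeas x : sq_infeas x = 0 -> feasible g h G H x.
Proof.
  rewrite /sq_infeas => HW.
  have P1 := @rsum_nonneg _ (fun i => sqr_pos (g i x)) (fun i => Rle_0_sqr _).
  have P2 := @rsum_nonneg _ (fun j => h j x * h j x) (fun j => Rle_0_sqr _).
  have P3 := @rsum_nonneg _ (fun i => vc_res i x * vc_res i x) (fun i => Rle_0_sqr _).
  split; [|split] => i.
  - have : sqr_pos (g i x) <= 0.
      by have := rsum_term_le (F := fun i => sqr_pos (g i x)) i (fun i => Rle_0_sqr _); lra.
    by rewrite /sqr_pos /Rmax; case: Rle_dec; nra.
  - have : h i x * h i x <= 0.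
      by have := rsum_term_le (F := fun j => h j x * h j x) i (fun j => Rle_0_sqr _); lra.
    nra.
  - have : vc_res i x * vc_res i x <= 0.
      by have := rsum_term_le (F := fun i => vc_res i x * vc_res i x) i (fun i => Rle_0_sqr _); lra.
    by rewrite /vc_res /Rmax /Rmin; repeat case: Rle_dec; split; nra.
Qed.

Variables (dg : 'I_m -> vec n -> vec n) (dh : 'I_l -> vec n -> vec n).
Variables (dG dH : 'I_q -> vec n -> vec n).
Hypotheses (Cg : forall i, is_C1 (g i) (dg i)) (Ch : forall j, is_C1 (h j) (dh j)).
Hypotheses (CG : forall i, is_C1 (G i) (dG i)) (CH : forall i, is_C1 (H i) (dH i)).

Lemma cont_vc_res i x : cont (vc_res i) x.
Proof.
  have cG := has_gradient_cont (proj1 (CG i) x); have cH := has_gradient_cont (proj1 (CH i) x).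
  by apply/cont_max/cont_max/cont_min => //; [apply: cont_const|apply: cont_opp].
Qed.

Lemma cont_Rmax0_g i x : cont (fun y => Rmax 0 (g i y)) x.
Proof. exact/cont_max/(has_gradient_cont (proj1 (Cg i) x))/cont_const. Qed.

Lemma cont_infeas x : cont infeas x.
Proof.
  apply: cont_plus; [apply: cont_plus|]; apply: cont_rsum => i;
    [exact: cont_Rmax0_g|exact/cont_abs/(has_gradient_cont (proj1 (Ch i) x))|exact: cont_vc_res].
Qed.

Lemma cont_sq_infeas x : cont sq_infeas x.
Proof.
  have ch j := has_gradient_cont (proj1 (Ch j) x).
  have cg := cont_Rmax0_g; have cvc := cont_vc_res.
  by apply: cont_plus; [apply: cont_plus|]; apply: cont_rsum => i; apply: cont_mult.
Qed.

(* Freezing the [min] in [vc_res] at its branch active at [z] gives a differentiable upper model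
   of [sq_infeas] that touches it at [z]. *)
Definition vc_branch z i x := if Rle_dec (G i z) (H i z) then G i x else H i x.
Definition vc_branch_grad z i := if Rle_dec (G i z) (H i z) then dG i z else dH i z.

Definition sq_infeas_model z x :=
  rsum (fun i => sqr_pos (g i x)) + rsum (fun j => h j x * h j x)
  + rsum (fun i => sqr_pos (- H i x) + sqr_pos (vc_branch z i x)).

Definition sq_infeas_model_grad z : vec n := fun k =>
  rsum (fun i => 2 * Rmax 0 (g i z) * dg i z k) + rsum (fun j => 2 * h j z * dh j z k)
  + rsum (fun i => -2 * Rmax 0 (- H i z) * dH i z k
                   + 2 * Rmax 0 (vc_branch z i z) * vc_branch_grad z i k).

Lemma vc_res_sqr i x :
  vc_res i x * vc_res i x = sqr_pos (- H i x) + sqr_pos (Rmin (G i x) (H i x)).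
Proof.
  rewrite /vc_res /sqr_pos /Rmax /Rmin.
  by case: (Rle_dec (G i x) (H i x)); repeat case: Rle_dec; nra.
Qed.

Lemma vc_res_sqr_le z i x :
  vc_res i x * vc_res i x <= sqr_pos (- H i x) + sqr_pos (vc_branch z i x).
Proof.
  rewrite vc_res_sqr; apply/Rplus_le_compat_l/sqr_pos_le.
  by rewrite /vc_branch; case: Rle_dec => ?; [apply: Rmin_l|apply: Rmin_r].
Qed.

Lemma vc_res_sqr_eq z i :
  vc_res i z * vc_res i z = sqr_pos (- H i z) + sqr_pos (vc_branch z i z).
Proof. by rewrite vc_res_sqr /vc_branch /Rmin; case: Rle_dec. Qed.

Lemma sq_infeas_le_model z x : sq_infeas x <= sq_infeas_model z x.
Proof. by have := rsum_le (vc_res_sqr_le z ^~ x); rewrite /sq_infeas /sq_infeas_model; lra. Qed.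

Lemma sq_infeas_model_eq z : sq_infeas z = sq_infeas_model z z.
Proof. by rewrite /sq_infeas /sq_infeas_model (rsum_ext (vc_res_sqr_eq z)). Qed.

Lemma has_gradient_sq_infeas_model z :
  has_gradient (sq_infeas_model z) z (sq_infeas_model_grad z).
Proof.
  have Hbr i : has_gradient (vc_branch z i) z (vc_branch_grad z i).
    rewrite /vc_branch /vc_branch_grad.
    by case: Rle_dec => ?; [apply: (proj1 (CG i))|apply: (proj1 (CH i))].
  apply: has_gradient_ext (has_gradient_plus (has_gradient_plus
      (has_gradient_rsum (fun i => has_gradient_sqr_pos (proj1 (Cg i) z)))
      (has_gradient_rsum (fun j => has_gradient_sqr (proj1 (Ch j) z))))
      (has_gradient_rsum (fun i =>
         has_gradient_plus (has_gradient_sqr_pos_opp (proj1 (CH i) z))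
                           (has_gradient_sqr_pos (Hbr i)))))
    => [x|k] //.
Qed.

(* [mscale z] is [0] at feasible [z], where [sqrt (sq_infeas z) = 0]. *)
Definition mscale z := / sqrt (sq_infeas z).

Definition mult_g z i := Rmax 0 (g i z) * mscale z.
Definition mult_h z j := h j z * mscale z.
Definition mult_G z i := if Rle_dec (G i z) (H i z) then Rmax 0 (G i z) * mscale z else 0.
Definition mult_H z i :=
  (Rmax 0 (- H i z) - if Rle_dec (G i z) (H i z) then 0 else Rmax 0 (H i z)) * mscale z.

Definition stat_res z k :=
  rsum (fun i => mult_g z i * dg i z k) + rsum (fun j => mult_h z j * dh j z k)
  + rsum (fun i => mult_G z i * dG i z k) - rsum (fun i => mult_H z i * dH i z k).

Definition mult_sqnorm z :=
  rsum (fun i => mult_g z i * mult_g z i) + rsum (fun j => mult_h z j * mult_h z j)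
  + rsum (fun i => mult_G z i * mult_G z i) + rsum (fun i => mult_H z i * mult_H z i).

Lemma stat_res_eq z k : stat_res z k = sq_infeas_model_grad z k * mscale z / 2.
Proof.
  rewrite /stat_res /Rminus Rplus_assoc -rsum_opp -rsum_plus.
  rewrite /sq_infeas_model_grad /Rdiv Rmult_assoc Rmult_comm !Rmult_plus_distr_l -!rsum_scal.
  congr (_ + _ + _); apply: rsum_ext => i; rewrite /mult_g /mult_h; try field.
  rewrite /mult_G /mult_H /vc_branch /vc_branch_grad.
  by case: (Rle_dec (G i z) (H i z)) => ? /=; field.
Qed.

Lemma mscale_nonneg z : 0 <= mscale z.
Proof. exact: inv_sqrt_nonneg. Qed.

Lemma mult_sqnorm_eq z : mult_sqnorm z = sq_infeas z * (mscale z * mscale z).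
Proof.
  rewrite /mult_sqnorm /sq_infeas Rplus_assoc -rsum_plus !Rmult_plus_distr_r.
  rewrite ![rsum _ * _]Rmult_comm -!rsum_scal.
  congr (_ + _ + _); apply: rsum_ext => i; rewrite /mult_g /mult_h /sqr_pos; try ring.
  have Hprod : Rmax 0 (- H i z) * Rmax 0 (H i z) = 0.
    by rewrite /Rmax; repeat case: Rle_dec => ?; nra.
  rewrite vc_res_sqr_eq /mult_G /mult_H /vc_branch /sqr_pos.
  by case: (Rle_dec (G i z) (H i z)) => ? /=; nra.
Qed.

Lemma mult_g_nonneg z i : 0 <= mult_g z i.
Proof. exact: Rmult_le_pos (Rmax_l _ _) (mscale_nonneg z). Qed.

Lemma mult_G_nonneg z i : 0 <= mult_G z i.
Proof.
  rewrite /mult_G; case: Rle_dec => ? /=; last lra.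
  exact: Rmult_le_pos (Rmax_l _ _) (mscale_nonneg z).
Qed.

Lemma mult_H_nonneg z i : G i z <= H i z -> 0 <= mult_H z i.
Proof.
  rewrite /mult_H; case: Rle_dec => ? //= _; rewrite Rminus_0_r.
  exact: Rmult_le_pos (Rmax_l _ _) (mscale_nonneg z).
Qed.

Lemma mult_g_eq0 z i : g i z < 0 -> mult_g z i = 0.
Proof. by rewrite /mult_g /Rmax => ?; case: Rle_dec => ?; [lra|ring]. Qed.

Lemma mult_G_eq0_of_neg z i : G i z < 0 -> mult_G z i = 0.
Proof. by rewrite /mult_G /Rmax => ?; repeat case: Rle_dec => ? //=; [lra|ring]. Qed.

Lemma mult_G_eq0_of_gt z i : H i z < G i z -> mult_G z i = 0.
Proof. by rewrite /mult_G => ?; case: Rle_dec => ? //=; lra. Qed.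

Lemma mult_H_eq0 z i : G i z <= H i z -> 0 < H i z -> mult_H z i = 0.
Proof. by rewrite /mult_H /Rmax => ? ?; repeat case: Rle_dec => ? //=; [lra|ring]. Qed.

Lemma mult_H_mult_G z i : mult_H z i * mult_G z i = 0.
Proof.
  rewrite /mult_H /mult_G; case: Rle_dec => ? /=; last ring.
  rewrite Rminus_0_r Rmult_assoc -(Rmult_assoc (mscale z)) (Rmult_comm (mscale z)) !Rmult_assoc.
  rewrite /Rmax; case: Rle_dec => ?; case: Rle_dec => ?; try ring.
  have -> : G i z = 0 by lra.
  ring.
Qed.

Lemma mult_g_sign z i : mult_g z i <> 0 -> 0 < mult_g z i * g i z.
Proof.
  rewrite /mult_g /Rmax; case: Rle_dec => ? Hne; last by exfalso; apply: Hne; ring.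
  exact: scaled_sign (mscale_nonneg z) Hne.
Qed.

Lemma mult_h_sign z j : mult_h z j <> 0 -> 0 < mult_h z j * h j z.
Proof. exact: scaled_sign (mscale_nonneg z). Qed.

Lemma mult_G_sign z i : mult_G z i <> 0 -> 0 < mult_G z i * G i z.
Proof.
  rewrite /mult_G /Rmax; case: Rle_dec => ? /=; last by [].
  case: Rle_dec => ? Hne; last by exfalso; apply: Hne; ring.
  exact: scaled_sign (mscale_nonneg z) Hne.
Qed.

Lemma mult_H_sign z i : mult_H z i <> 0 -> mult_H z i * H i z < 0.
Proof.
  rewrite /mult_H; move: (mscale_nonneg z) => Hs Hne.
  have := scaled_sign Hs Hne; move: Hne.
  by case: Rle_dec => ? /=; rewrite /Rmax; repeat case: Rle_dec => ? /=; nra.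
Qed.

Lemma sq_infeas_pos x : ~ feasible g h G H x -> 0 < sq_infeas x.
Proof.
  move=> Hx; case: (Rle_lt_or_eq_dec _ _ (sq_infeas_nonneg x)) => // HW.
  by case: Hx; apply: feasible_sq_infeas.
Qed.

(* Minimizing [sqrt sq_infeas + (2 / c) * dist _ y] over the ball of radius [c * infeas y / 2]
   around a point [y] that is far from the feasible set. *)
Lemma approx_stationary_point y c : 0 < c ->
  (forall z, feasible g h G H z -> c * infeas y < dist y z) ->
  exists z, dist z y <= c * infeas y / 2 /\ 0 < sq_infeas z /\
    vnorm (sq_infeas_model_grad z) <= 2 * sqrt (sq_infeas z) * (2 / c).
Proof.
  move=> Hc Hfar.
  have HWy : 0 < sq_infeas y.
    apply: sq_infeas_pos => Hy; have := Hfar y Hy.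
    by rewrite dist_refl infeas_feasible // Rmult_0_r; lra.
  have Hp : 0 < infeas y by have := sqrt_sq_infeas_le y; have := sqrt_lt_R0 _ HWy; lra.
  pose r := c * infeas y / 2; pose sig := 2 / c.
  have Er : 2 * r = c * infeas y by rewrite /r; field.
  have Hr : 0 < r by nra.
  have Hsig : 0 < sig by apply: Rdiv_lt_0_compat; lra.
  have Hsr : sig * r = infeas y by rewrite /sig /r; field; lra.
  pose psi x := sqrt (sq_infeas x) + sig * dist x y.
  have [z [Hzr Hzmin]] : exists z, dist z y <= r /\ forall x, dist x y <= r -> psi z <= psi x.
    apply: ex_min_closed_ball => [|x|x]; first lra.
    - apply: cont_plus; first exact/cont_sqrt/sq_infeas_nonneg/cont_sq_infeas.
      exact/cont_mult/cont_dist/cont_const.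
    - by rewrite /psi; have := sqrt_pos (sq_infeas x); have := dist_nonneg x y; nra.
  have Hpsiz : psi z <= infeas y.
    have := Hzmin y ltac:(rewrite dist_refl; lra); have := sqrt_sq_infeas_le y.
    by rewrite /psi dist_refl Rmult_0_r Rplus_0_r; lra.
  have HWz : 0 < sq_infeas z.
    by apply: sq_infeas_pos => Hz; have := Hfar z Hz; rewrite dist_sym; nra.
  have Hzr' : dist z y < r.
    apply: (Rmult_lt_reg_l sig) => //; have := sqrt_lt_R0 _ HWz.
    by rewrite /psi in Hpsiz; lra.
  exists z; split; first lra.
  split; first exact: HWz.
  apply: (@local_min_sqrt_model_grad_le _ sq_infeas (sq_infeas_model z) _ z y sig (r - dist z y)).
  - exact: sqrt_lt_R0.
  - lra.
  - lra.
  - exact: sq_infeas_nonneg.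
  - exact: sq_infeas_le_model.
  - exact: sq_infeas_model_eq.
  - exact: has_gradient_sq_infeas_model.
  - by move=> x Hx; apply: Hzmin; have := dist_triang x z y; lra.
Qed.

(* The four multiplier families as one function on a finite type, so that a single
   Bolzano-Weierstrass extraction makes all of them converge. *)
Definition multiplier z (a : 'I_m + 'I_l + 'I_q + 'I_q) :=
  match a with
  | inl (inl (inl i)) => mult_g z i
  | inl (inl (inr j)) => mult_h z j
  | inl (inr i) => mult_G z i
  | inr i => mult_H z i
  end.

Lemma Rabs_multiplier_le1 z a : 0 < sq_infeas z -> Rabs (multiplier z a) <= 1.
Proof.
  move=> HW; have Hn : mult_sqnorm z = 1.
    rewrite mult_sqnorm_eq /mscale -Rinv_mult sqrt_sqrt; last exact: sq_infeas_nonneg.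
    by rewrite Rinv_r //; lra.
  suff Ha : multiplier z a * multiplier z a <= 1.
    have := Rle_0_sqr (multiplier z a - 1); have := Rle_0_sqr (multiplier z a + 1).
    by rewrite /Rsqr => ? ?; apply: Rabs_le; split; nra.
  have P1 := @rsum_nonneg _ (fun i => mult_g z i * mult_g z i) (fun i => Rle_0_sqr _).
  have P2 := @rsum_nonneg _ (fun j => mult_h z j * mult_h z j) (fun j => Rle_0_sqr _).
  have P3 := @rsum_nonneg _ (fun i => mult_G z i * mult_G z i) (fun i => Rle_0_sqr _).
  have P4 := @rsum_nonneg _ (fun i => mult_H z i * mult_H z i) (fun i => Rle_0_sqr _).
  move: Hn; rewrite /mult_sqnorm; case: a => [[[i|i]|i]|i] /=.
  - by have := rsum_term_le (F := fun i => mult_g z i * mult_g z i) i (fun i => Rle_0_sqr _); lra.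
  - by have := rsum_term_le (F := fun j => mult_h z j * mult_h z j) i (fun j => Rle_0_sqr _); lra.
  - by have := rsum_term_le (F := fun i => mult_G z i * mult_G z i) i (fun i => Rle_0_sqr _); lra.
  - by have := rsum_term_le (F := fun i => mult_H z i * mult_H z i) i (fun i => Rle_0_sqr _); lra.
Qed.

Section LimitMultiplier.
Variables (xs : vec n) (zs : nat -> vec n).
Variables (lam : 'I_m -> R) (mu : 'I_l -> R) (etaG etaH : 'I_q -> R).
Hypotheses (Hxs : feasible g h G H xs) (Hzs : seq_converges zs xs).
Hypothesis HW : forall j, 0 < sq_infeas (zs j).
Hypothesis Hstat : forall k, Un_cv (fun j => stat_res (zs j) k) 0.
Hypotheses (Hlam : forall i, Un_cv (fun j => mult_g (zs j) i) (lam i))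
  (Hmu : forall i, Un_cv (fun j => mult_h (zs j) i) (mu i))
  (HetaG : forall i, Un_cv (fun j => mult_G (zs j) i) (etaG i))
  (HetaH : forall i, Un_cv (fun j => mult_H (zs j) i) (etaH i)).

Let Hg i := Un_cv_C1 (Cg i) Hzs.
Let HG i := Un_cv_C1 (CG i) Hzs.
Let HH i := Un_cv_C1 (CH i) Hzs.

Lemma limit_multiplier_stationary k :
  rsum (fun i => lam i * dg i xs k) + rsum (fun j => mu j * dh j xs k)
  + rsum (fun i => etaG i * dG i xs k) - rsum (fun i => etaH i * dH i xs k) = 0.
Proof.
  apply: (UL_sequence (fun j => stat_res (zs j) k)) (Hstat k).
  apply: CV_minus; [apply: CV_plus; [apply: CV_plus|]|]; apply: Un_cv_rsum => i;
    apply: CV_mult; by [|apply: Un_cv_C1_grad Hzs].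
Qed.

Lemma limit_multiplier_nonzero : nonzero_multiplier lam mu etaG etaH.
Proof.
  have Hsum : rsum (fun i => lam i * lam i) + rsum (fun j => mu j * mu j)
      + rsum (fun i => etaG i * etaG i) + rsum (fun i => etaH i * etaH i) = 1.
    apply: (UL_sequence (fun j => mult_sqnorm (zs j))).
      by apply: CV_plus; [apply: CV_plus; [apply: CV_plus|]|]; apply: Un_cv_rsum => i;
         apply: CV_mult.
    apply: Un_cv_ext (Un_cv_const 1) => j.
    rewrite mult_sqnorm_eq /mscale -Rinv_mult sqrt_sqrt ?Rinv_r //; last exact: sq_infeas_nonneg.
    by have := HW j; lra.
  apply: NNPP => Hz; move: Hsum; rewrite !rsum_zero; [lra| | | |] => i; apply: NNPP => Hi;
    apply: Hz; [right; right; right|right; right; left|right; left|left];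
    by exists i => E; apply: Hi; rewrite E Rmult_0_l.
Qed.

Lemma limit_lam_nonneg i : 0 <= lam i.
Proof. exact: Un_cv_nonneg (ex_intro _ 0%nat (fun j _ => mult_g_nonneg _ _)) (Hlam i). Qed.

Lemma limit_etaG_nonneg i : 0 <= etaG i.
Proof. exact: Un_cv_nonneg (ex_intro _ 0%nat (fun j _ => mult_G_nonneg _ _)) (HetaG i). Qed.

Lemma limit_lam_eq0 i : g i xs <> 0 -> lam i = 0.
Proof.
  move=> Hi; have [N HN] := Un_cv_eventually_neg (Hg i) ltac:(have := proj1 Hxs i; lra).
  by apply: Un_cv_eventually_zero (Hlam i); exists N => j /HN /mult_g_eq0.
Qed.

Lemma limit_etaG_eq0_of_neg i : G i xs < 0 -> etaG i = 0.
Proof.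
  move=> Hi; have [N HN] := Un_cv_eventually_neg (HG i) Hi.
  by apply: Un_cv_eventually_zero (HetaG i); exists N => j /HN /mult_G_eq0_of_neg.
Qed.

Lemma limit_etaG_eq0_of_gt i : H i xs < G i xs -> etaG i = 0.
Proof.
  move=> Hi; have [N HN] := Un_cv_eventually_lt (HH i) (HG i) Hi.
  by apply: Un_cv_eventually_zero (HetaG i); exists N => j /HN /mult_G_eq0_of_gt.
Qed.

Lemma limit_etaH_eq0 i : 0 < H i xs -> etaH i = 0.
Proof.
  move=> Hi; have HGi : G i xs < H i xs by have := proj2 (proj2 Hxs) i; nra.
  have [N1 HN1] := Un_cv_eventually_lt (HG i) (HH i) HGi.
  have [N2 HN2] := Un_cv_eventually_pos (HH i) Hi.
  apply: Un_cv_eventually_zero (HetaH i); exists (N1 + N2)%nat => j Hj.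
  by apply: mult_H_eq0; [apply/Rlt_le/HN1|apply: HN2]; lia.
Qed.

Lemma limit_etaH_nonneg i : G i xs < H i xs -> 0 <= etaH i.
Proof.
  move=> Hi; have [N HN] := Un_cv_eventually_lt (HG i) (HH i) Hi.
  by apply: Un_cv_nonneg (HetaH i); exists N => j /HN /Rlt_le /mult_H_nonneg.
Qed.

Lemma limit_etaH_etaG i : etaH i * etaG i = 0.
Proof.
  apply: Un_cv_eventually_zero (CV_mult _ _ _ _ (HetaH i) (HetaG i)).
  by exists 0%nat => j _; apply: mult_H_mult_G.
Qed.

Lemma limit_multiplier_admissible : admissible g G H dg dh dG dH xs lam mu etaG etaH.
Proof.
  split; first exact: limit_multiplier_stationary.
  split; first by move=> i _; apply: limit_lam_nonneg.
  split; first exact: limit_lam_eq0.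
  split; first by move=> i _; apply: limit_etaG_eq0_of_neg.
  split; first by move=> i _; apply: limit_etaG_eq0_of_neg.
  split; first by move=> i H0 HG0; apply: limit_etaG_eq0_of_gt; lra.
  split; first by move=> i _ _; apply: limit_etaG_nonneg.
  split; first by move=> i _ _; apply: limit_etaG_nonneg.
  split; first exact: limit_etaH_eq0.
  split; first by move=> i H0 HG0; apply: limit_etaH_nonneg; lra.
  by move=> i _ _; apply: limit_etaH_etaG.
Qed.

Lemma limit_multiplier_signs : exists N, forall j, (j >= N)%coq_nat ->
  (forall i, 0 < lam i -> 0 < lam i * g i (zs j)) /\
  (forall i, mu i <> 0 -> 0 < mu i * h i (zs j)) /\
  (forall i, etaH i <> 0 -> etaH i * H i (zs j) < 0) /\
  (forall i, 0 < etaG i -> 0 < etaG i * G i (zs j)).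
Proof.
  have [N1 H1] := Un_cv_sign_eventually_fin (b := fun j i => g i (zs j)) Hlam
    (fun j i => @mult_g_sign _ _).
  have [N2 H2] := Un_cv_sign_eventually_fin (b := fun j i => h i (zs j)) Hmu
    (fun j i => @mult_h_sign _ _).
  have [N3 H3] := Un_cv_sign_eventually_fin (b := fun j i => - H i (zs j)) HetaH
    (fun j i Hne => ltac:(have := mult_H_sign Hne; lra)).
  have [N4 H4] := Un_cv_sign_eventually_fin (b := fun j i => G i (zs j)) HetaG
    (fun j i => @mult_G_sign _ _).
  exists (N1 + N2 + N3 + N4)%nat => j Hj; split; [|split; [|split]] => i Hi.
  - by apply: H1 => //; [lia|lra].
  - by apply: H2 => //; lia.
  - by have := H3 j ltac:(lia) i Hi; lra.
  - by apply: H4 => //; [lia|lra].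
Qed.

End LimitMultiplier.

Lemma not_GQN_of_approx_stationary xs zs :
  feasible g h G H xs -> seq_converges zs xs -> (forall j, 0 < sq_infeas (zs j)) ->
  (forall k, Un_cv (fun j => stat_res (zs j) k) 0) -> ~ MPVC_GQN g h G H dg dh dG dH xs.
Proof.
  move=> Hxs Hzs HW Hstat Hgqn.
  have [phi [L [Hphi HL]]] := Bolzano_Weierstrass_fin (u := fun j => multiplier (zs j))
    (fun j a => Rabs_multiplier_le1 a (HW j)).
  pose zc j := zs (phi j).
  have Hzc : seq_converges zc xs.
    by move=> e He; have [N HN] := Hzs e He; exists N => j Hj;
       apply: HN; apply: leq_trans Hj (strict_incr_ge Hphi j).
  have Hstatc k := Un_cv_subseq Hphi (Hstat k).
  pose lam i := L (inl (inl (inl i))); pose mu j := L (inl (inl (inr j))).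
  pose etaG i := L (inl (inr i)); pose etaH i := L (inr i).
  have Hlam i : Un_cv (fun j => mult_g (zc j) i) (lam i) := HL (inl (inl (inl i))).
  have Hmu i : Un_cv (fun j => mult_h (zc j) i) (mu i) := HL (inl (inl (inr i))).
  have HetaG i : Un_cv (fun j => mult_G (zc j) i) (etaG i) := HL (inl (inr i)).
  have HetaH i : Un_cv (fun j => mult_H (zc j) i) (etaH i) := HL (inr i).
  have [N HN] := limit_multiplier_signs Hlam Hmu HetaG HetaH.
  apply: Hgqn; exists lam, mu, etaG, etaH, (fun j => zc (j + N)%nat).
  split; first exact: limit_multiplier_admissible Hxs Hzc Hstatc Hlam Hmu HetaG HetaH.
  split; first exact: (limit_multiplier_nonzero (zs := zc) (fun j => HW _) Hlam Hmu HetaG HetaH).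
  by split; [apply: seq_converges_shift|move=> j; apply: HN; lia].
Qed.

(** * The local error bound *)

Definition local_error_bound xs := exists c d, 0 < c /\ 0 < d /\
  forall y, dist y xs < d -> exists z, feasible g h G H z /\ dist y z <= c * infeas y.

Lemma approx_stationary_seq xs : feasible g h G H xs -> ~ local_error_bound xs ->
  exists zs, seq_converges zs xs /\ (forall j, 0 < sq_infeas (zs j)) /\
    forall k, Un_cv (fun j => stat_res (zs j) k) 0.
Proof.
  move=> Hxs Hno; have Hj1 j : 0 < INR j + 1 by have := pos_INR j; lra.
  have Hfar j : exists y, dist y xs < / (INR j + 1) /\
      forall z, feasible g h G H z -> (INR j + 1) * infeas y < dist y z.
    apply: NNPP => Hj; apply: Hno; exists (INR j + 1), (/ (INR j + 1)).
    split => //; split => [|y Hy]; first exact: Rinv_0_lt_compat.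
    apply: NNPP => Hz; apply: Hj; exists y; split => // z Hfz.
    by apply: Rnot_le_lt => Hle; apply: Hz; exists z.
  have Hnear j : exists z, dist z xs <= 2 * / (INR j + 1) /\ 0 < sq_infeas z /\
      vnorm (sq_infeas_model_grad z) <= 2 * sqrt (sq_infeas z) * (2 / (INR j + 1)).
    have [y [Hy Hyfar]] := Hfar j.
    have [z [Hzy HWz]] := approx_stationary_point (Hj1 j) Hyfar.
    exists z; split => //; have := Hyfar xs Hxs; have := dist_triang z y xs.
    by have := Rinv_0_lt_compat _ (Hj1 j); lra.
  have [zs Hzs] := choice _ Hnear; exists zs; split; [|split] => [e He|j|k].
  - have He2 : e / 2 > 0 by lra.
    have [N HN] := Un_cv_inv_succ He2; exists N => j /leP Hj.
    by have := HN j Hj; have := proj1 (Hzs j); rewrite /Rdist Rminus_0_r Rabs_pos_eq;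
       [lra|apply/Rlt_le/Rinv_0_lt_compat].
  - exact: (proj1 (proj2 (Hzs j))).
  - apply: (Un_cv_squeeze0 (b := fun j => 2 * / (INR j + 1))); last first.
      by rewrite -(Rmult_0_r 2); apply: CV_mult (Un_cv_const 2) Un_cv_inv_succ.
    move=> j; have [_ [HW Hgrad]] := Hzs j; rewrite stat_res_eq /mscale.
    have Hs := sqrt_lt_R0 _ HW; set s := sqrt (sq_infeas (zs j)) in Hs Hgrad *.
    have := Rabs_coord_le_vnorm (sq_infeas_model_grad (zs j)) k.
    set a := sq_infeas_model_grad (zs j) k => Ha.
    have -> : a * / s / 2 = a * / (2 * s) by field; lra.
    rewrite Rabs_mult (Rabs_pos_eq (/ (2 * s))); last by apply/Rlt_le/Rinv_0_lt_compat; lra.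
    apply: (Rmult_le_reg_r (2 * s)); first lra.
    rewrite Rmult_assoc Rinv_l; last lra.
    have -> : 2 * / (INR j + 1) * (2 * s) = 2 * s * (2 / (INR j + 1)) by rewrite /Rdiv; ring.
    lra.
Qed.

Lemma local_error_bound_of_GQN xs : feasible g h G H xs ->
  MPVC_GQN g h G H dg dh dG dH xs -> local_error_bound xs.
Proof.
  move=> Hxs Hgqn; apply: NNPP => Hno.
  have [zs [Hzs [HW Hstat]]] := approx_stationary_seq Hxs Hno.
  exact: not_GQN_of_approx_stationary Hxs Hzs HW Hstat Hgqn.
Qed.

End MPVC.

Theorem theorem3p2 (n m l q : nat)
  (f : vec n -> R) (g : 'I_m -> vec n -> R) (h : 'I_l -> vec n -> R)
  (G H : 'I_q -> vec n -> R)
  (df : vec n -> vec n) (dg : 'I_m -> vec n -> vec n) (dh : 'I_l -> vec n -> vec n)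
  (dG dH : 'I_q -> vec n -> vec n)
  (Cf : is_C1 f df) (Cg : forall i, is_C1 (g i) (dg i)) (Ch : forall j, is_C1 (h j) (dh j))
  (CG : forall i, is_C1 (G i) (dG i)) (CH : forall i, is_C1 (H i) (dH i))
  (xs : vec n)
  (Hmin : mpvc_local_min f g h G H xs)
  (Hlip : locally_lipschitz f xs)
  (Hgqn : MPVC_GQN g h G H dg dh dG dH xs) :
  exact_penalty_at f g h G H xs.
Proof.
  case: Hmin => Hxs Hloc.
  have [c [d [Hc [Hd Heb]]]] := local_error_bound_of_GQN Cg Ch CG CH Hxs Hgqn.
  exact: (exact_penalty_of_error_bound Hloc Hlip (cont_infeas Cg Ch CG CH xs)
    (infeas_feasible Hxs) (@infeas_nonneg _ _ _ _ g h G H) Hc Hd Heb).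
Qed.
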